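(* Let $r\geq1$, let $\mathbf a=(a_1,\ldots,a_r)$ be positive integers, let $D$ be a positive common multiple of $a_1,\ldots,a_r$, and let $j\geq 1$ be an integer dividing $a_i$ for some $1\leq i\leq r$; put $\rho_j=e^{2\pi i/j}$. Then for all $n\ge 0$, $$ W_{j}(n,\mathbf a) = \frac{\rho_j^{-n}}{D(r-1)!} \sum_{m=1}^r \sum_{\ell=1}^{j} \rho_j^{\ell} \sum_{k=m-1}^{r-1} s(r,k)\, (-1)^{k-m+1} \binom{k}{m-1} \sum_{\substack{0\leq j_1\leq \frac{D}{a_1}-1,\ldots, 0\leq j_r\leq \frac{D}{a_r}-1 \\ a_1j_1+\cdots+a_rj_r \equiv \ell \pmod j}} D^{-k} (a_1j_1+\cdots+a_rj_r)^{k-m+1}\, n^{m-1}.$$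
   Context: $p_{\mathbf a}(n)$ is the number of integer solutions $(x_1,\ldots,x_r)$ of $a_1x_1+\cdots+a_rx_r=n$ with all $x_i\geq 0$. There are unique polynomials $P_\lambda$, indexed by the $D$-th roots of unity $\lambda$, with $p_{\mathbf a}(n)=\sum_{\lambda^D=1}P_\lambda(n)\lambda^{-n}$ for all $n\geq 0$; the Sylvester wave is $W_j(n,\mathbf a)=P_{\rho_j}(n)\rho_j^{-n}$. Here $s(r,k)$ denotes the coefficient of $x^k$ in $(x+1)(x+2)\cdots(x+r-1)$ (i.e. the unsigned Stirling number of the first kind $\left[{r\atop k+1}\right]$), the inner sum is over integer tuples, and $0^0=1$. *)

From HB Require Import structures.
From mathcomp Require Import all_boot all_order all_algebra.
From mathcomp Require Import complex.
From mathcomp Require Import reals trigo.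
Set Implicit Arguments. Unset Strict Implicit. Unset Printing Implicit Defensive.
Import Order.TTheory GRing.Theory Num.Theory.
Local Open Scope ring_scope.

(* p_a(n): number of (x_1..x_r) in N^r with a_1 x_1 + ... + a_r x_r = n.
   Since every a_i >= 1, each x_i <= n, so we count tuples with x_i in [0,n]. *)
Definition p_count (r : nat) (a : 'I_r -> nat) (n : nat) : nat :=
  #|[set x : {ffun 'I_r -> 'I_n.+1} | (\sum_(i < r) a i * x i)%N == n]|.

Definition stir (r k : nat) : int :=
  (\prod_(1 <= t < r) ('X + (t%:R)%:P : {poly int})) `_ k.

Definition rho (R : realType) (j : nat) : R[i] :=
  (cos (2 * pi / j%:R) +i* sin (2 * pi / j%:R))%C.

From HB Require Import structures.
From mathcomp Require Import all_boot all_order all_algebra.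
From mathcomp Require Import complex.
From mathcomp Require Import reals trigo.
From mathcomp Require Import ring lra.
Import Order.TTheory GRing.Theory Num.Theory.
Local Open Scope ring_scope.

(* p_a(n) is the coefficient of X^n in prod_i 1/(1 - X^(a_i)), which equals
   (prod_i sum_(t < D/a_i) X^(a_i t)) / (1 - X^D)^r.  Expanding the numerator
   over the box 0 <= j_i < D/a_i gives, with A_j = sum_i a_i j_i,
     p_a(n) = sum_j [D | n - A_j] C((n - A_j)/D + r - 1, r - 1).
   The indicator is (1/D) sum_(lambda^D = 1) lambda^(A_j) lambda^(-n), and the
   binomial is prod_(t = 1)^(r-1) ((n - A_j)/D + t) / (r-1)!, a polynomial in n
   which also vanishes when n < A_j and D | n - A_j, since then (n - A_j)/D lies
   in [-(r-1), -1] because A_j < rD.  This writes p_a(n) as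
   sum_lambda F_lambda(n) lambda^(-n) with explicit polynomials F_lambda, and such
   representations are unique (a difference-operator argument on the distinct
   bases lambda^(-1)), so P_lambda = F_lambda.  For lambda = rho_j, lambda^(A_j)
   only depends on A_j mod j, and expanding the product through the Stirling
   numbers s(r, k) and each ((n - A_j)/D)^k binomially gives the formula. *)

Section RootsOfUnity.
Variable R : realType.

Definition cis (x : R) : R[i] := (cos x +i* sin x)%C.

Lemma cisD x y : cis x * cis y = cis (x + y).
Proof. by rewrite /cis cosD sinD; simpc; congr (_ +i* _)%C; ring. Qed.

Lemma cisX x k : cis x ^+ k = cis (k%:R * x).
Proof.
elim: k => [|k IHk]; first by rewrite expr0 mul0r /cis cos0 sin0.
by rewrite exprS IHk cisD mulrSr mulrDl mul1r addrC.
Qed.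

Lemma cis_neq1 x : 0 < x < pi *+ 2 -> cis x != 1.
Proof.
move=> /andP[x_gt0 x_lt2pi]; apply/negP => /eqP[cos_x1 _].
have sin_gt0 : 0 < sin (x / 2).
  by apply: sin_gt0_pi; rewrite divr_gt0 //= ltr_pdivrMr // mulr_natr.
have halfK : x / 2 *+ 2 = x by rewrite -mulr_natr divfK ?pnatr_eq0.
have := cos_mulr2n (x / 2); rewrite halfK cos_x1 cos2sin2.
nra.
Qed.

Lemma rhoE n : rho R n = cis (2 * pi / n%:R).
Proof. by []. Qed.

Lemma rho_primitive {n : nat} : (0 < n)%N -> n.-primitive_root (rho R n).
Proof.
move=> n_gt0; apply/andP; split => //; apply/forallP => i.
rewrite unity_rootE rhoE cisX.
have n_neq0 : (n%:R : R) != 0 by rewrite pnatr_eq0 -lt0n.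
have -> : i.+1%:R * (2 * pi / n%:R) = pi *+ 2 * (i.+1%:R / n%:R) :> R.
  by rewrite -mulr_natr; field.
case: (ltngtP i.+1 n) => [lt_in||->].
- have pi2_gt0 : 0 < pi *+ 2 :> R by rewrite mulrn_wgt0 ?pi_gt0.
  rewrite eqbF_neg; apply: cis_neq1.
  rewrite mulr_gt0 ?divr_gt0 ?ltr0n //= -[ltRHS]mulr1 ltr_pM2l //.
  by rewrite ltr_pdivrMr ?ltr0n // mul1r ltr_nat.
- by rewrite ltnNge ltn_ord.
- by rewrite divff // mulr1 /cis cos2pi sin2pi eqxx.
Qed.

Lemma rho_dvd {n d : nat} : (0 < n)%N -> (d %| n)%N -> rho R d = rho R n ^+ (n %/ d).
Proof.
move=> n_gt0 d_dvd_n; rewrite !rhoE cisX; congr cis.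
have d_neq0 : (d%:R : R) != 0 by rewrite pnatr_eq0 -lt0n (dvdn_gt0 n_gt0 d_dvd_n).
have q_neq0 : ((n %/ d)%:R : R) != 0.
  by rewrite pnatr_eq0 -lt0n divn_gt0 ?(dvdn_gt0 n_gt0 d_dvd_n) // dvdn_leq.
by rewrite -{2}(divnK d_dvd_n) natrM; field; apply/andP.
Qed.

End RootsOfUnity.

Lemma size_poly_leq_coef0 (R : nzSemiRingType) (p : {poly R}) n :
  (size p <= n.+1)%N -> p`_n = 0 -> (size p <= n)%N.
Proof.
move=> size_p pn0; apply/leq_sizeP => k; rewrite leq_eqVlt => /predU1P[<- //|lt_nk].
exact/nth_default/(leq_trans size_p).
Qed.

Section QuasiPolynomialUniqueness.
Context {F : numFieldType}.

Lemma poly_natr_roots_eq0 (p : {poly F}) : (forall n : nat, p.[n%:R] = 0) -> p = 0.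
Proof.
move=> p_nat0; apply/eqP/negPn/negP => p_neq0.
have := max_poly_roots p_neq0 (rs := [seq i%:R | i <- iota 0 (size p)]).
rewrite size_map size_iota ltnn => max_roots; suff : false by []; apply: max_roots.
  by apply/allP => _ /mapP[i _ ->]; apply/rootP.
by rewrite map_inj_uniq ?iota_uniq //; apply: (mulrIn (oner_neq0 F)).
Qed.

Definition expdiff (mu1 mu : F) (q : {poly F}) : {poly F} :=
  mu *: (q \Po ('X + 1)) - mu1 *: q.

Lemma horner_expdiff mu1 mu q (n : nat) :
  (expdiff mu1 mu q).[n%:R] * mu ^+ n = q.[n.+1%:R] * mu ^+ n.+1 - mu1 * (q.[n%:R] * mu ^+ n).
Proof.
rewrite /expdiff hornerD hornerN !hornerZ horner_comp hornerD hornerX hornerC -natr1.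
by rewrite exprS mulrBl mulrA [mu * _]mulrC mulrA.
Qed.

Lemma size_expdiff mu1 mu q : (size (expdiff mu1 mu q) <= size q)%N.
Proof.
rewrite /expdiff; apply: leq_trans (size_polyD _ _) _; rewrite geq_max size_polyN.
by rewrite !(leq_trans (size_scale_leq _ _)) // size_comp_poly2 // size_XaddC.
Qed.

Lemma expdiff_coef_top mu1 mu q :
  (expdiff mu1 mu q)`_(size q).-1 = (mu - mu1) * lead_coef q.
Proof.
rewrite /expdiff coefB !coefZ mulrBl -/(lead_coef q); congr (_ * _ - _).
have size_X1 : size ('X + 1 : {poly F}) = 2 by rewrite size_XaddC.
rewrite -(size_comp_poly2 q size_X1) -/(lead_coef _) lead_coef_comp ?size_X1 //.
by rewrite lead_coefXaddC expr1n mulr1.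
Qed.

Lemma size_expdiff_lt mu q : q != 0 -> (size (expdiff mu mu q) < size q)%N.
Proof.
move=> q_neq0; have size_q_gt0 : (0 < size q)%N by rewrite size_poly_gt0.
rewrite -(prednK size_q_gt0) ltnS; apply: size_poly_leq_coef0.
  by rewrite prednK // size_expdiff.
by rewrite expdiff_coef_top subrr mul0r.
Qed.

Lemma expdiff_eq0 mu1 mu q : mu != mu1 -> expdiff mu1 mu q = 0 -> q = 0.
Proof.
move=> mu_neq q_diff0; apply/eqP; rewrite -lead_coef_eq0.
have := expdiff_coef_top mu1 mu q; rewrite q_diff0 coef0 => /esym/eqP.
by rewrite mulf_eq0 subr_eq0 (negbTE mu_neq).
Qed.

(* Induction on the total size of the Q k, k != k0: applying expdiff (mu k1)
   for some nonzero Q k1 lowers that size and keeps Q k0 nonzero. *)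
Lemma quasi_poly_uniq (I : finType) (mu : I -> F) (Q : I -> {poly F}) :
  injective mu -> (forall k, mu k != 0) ->
  (forall n : nat, \sum_k (Q k).[n%:R] * mu k ^+ n = 0) -> forall k, Q k = 0.
Proof.
move=> mu_inj mu_neq0 + k0; have [N] := ubnP (\sum_(k | k != k0) size (Q k)).
elim: N Q => [|N IHN] Q; first by rewrite ltn0.
move=> size_lt QE.
have [/existsP[k1 /andP[k1_neq Qk1_neq0]]|/existsPn Q_others0] :=
  boolP [exists k, (k != k0) && (Q k != 0)].
- pose Q' k := expdiff (mu k1) (mu k) (Q k).
  have Q'E n : \sum_k (Q' k).[n%:R] * mu k ^+ n = 0.
    under eq_bigr do rewrite horner_expdiff.
    by rewrite sumrB -mulr_sumr !QE mulr0 subrr.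
  apply: (@expdiff_eq0 (mu k1) (mu k0)).
    by rewrite (inj_eq mu_inj) eq_sym.
  apply: (IHN Q' _ Q'E); rewrite -ltnS (leq_trans _ size_lt) // ltnS.
  rewrite (bigD1 k1) //= [ltnRHS](bigD1 k1) //= -addSn.
  by rewrite leq_add ?size_expdiff_lt // leq_sum // => k _; apply: size_expdiff.
- apply: poly_natr_roots_eq0 => n; apply/eqP.
  have := QE n; rewrite (bigD1 k0) //= big1 => [|k k_neq]; last first.
    by move: (Q_others0 k); rewrite k_neq negbK => /eqP ->; rewrite horner0 mul0r.
  by rewrite addr0 => /eqP; rewrite mulf_eq0 expf_eq0 (negbTE (mu_neq0 k0)) andbF orbF.
Qed.

Lemma prim_root_quasi_poly_uniq {D} {z : F} {P G : F -> {poly F}} :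
  D.-primitive_root z ->
  (forall n : nat, \sum_(t < D) (P (z ^+ t)).[n%:R] * (z ^+ t) ^- n =
                   \sum_(t < D) (G (z ^+ t)).[n%:R] * (z ^+ t) ^- n) ->
  forall t : 'I_D, P (z ^+ t) = G (z ^+ t).
Proof.
move=> z_prim PG t; apply/eqP; rewrite -subr_eq0; apply/eqP.
have D_gt0 : (0 < D)%N := prim_order_gt0 z_prim.
pose mu (s : 'I_D) := (z ^+ s)^-1.
apply: (@quasi_poly_uniq _ mu (fun s => P (z ^+ s) - G (z ^+ s))) => [s u /invr_inj|s|n].
- by move/eqP; rewrite (eq_prim_root_expr z_prim) !modn_small // => /eqP /val_inj.
- by rewrite invr_eq0 expf_eq0 (prim_root_eq0 z_prim) (gtn_eqF D_gt0) andbF.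
- under eq_bigr do rewrite hornerD hornerN mulrBl exprVn.
  by rewrite sumrB PG subrr.
Qed.

End QuasiPolynomialUniqueness.

Definition weight r (a : 'I_r -> nat) D (jj : {ffun 'I_r -> 'I_D}) : nat :=
  (\sum_(i < r) a i * jj i)%N.

Definition in_box r (a : 'I_r -> nat) D (jj : {ffun 'I_r -> 'I_D}) : bool :=
  [forall i, (jj i < D %/ a i)%N].

Arguments weight {r} a {D} jj.
Arguments in_box {r} a {D} jj.

Lemma hockey_stick k m : (\sum_(i < m.+1) 'C(i + k, k) = 'C(m + k.+1, k.+1))%N.
Proof.
elim: m => [|m IHm]; first by rewrite big_ord1 add0n !binn.
by rewrite big_ord_recr /= IHm [in RHS]addnS binS -addSnnS addnC.
Qed.

Section GeneratingFunction.
Variable T : comNzRingType.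

Lemma p_count_coef r (a : 'I_r -> nat) n :
  (p_count a n)%:R = (\prod_(i < r) \sum_(x < n.+1) 'X^(a i * x) : {poly T})`_n.
Proof.
rewrite bigA_distr_bigA /= coef_sum /p_count -sum1_card natr_sum big_mkcond /=.
by apply: eq_bigr => x _; rewrite prodrXr coefXn inE eq_sym; case: (_ == _).
Qed.

Definition eq_upto n (p q : {poly T}) := forall i, (i <= n)%N -> p`_i = q`_i.

Lemma eq_uptoM n p p' q q' : eq_upto n p p' -> eq_upto n q q' -> eq_upto n (p * q) (p' * q').
Proof.
move=> pp' qq' i le_in; rewrite !coefM; apply: eq_bigr => k _.
by rewrite pp' ?qq' ?(leq_trans _ le_in) ?leq_subr // -ltnS.
Qed.

Lemma eq_upto_prod n r (p q : 'I_r -> {poly T}) :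
  (forall i, eq_upto n (p i) (q i)) -> eq_upto n (\prod_i p i) (\prod_i q i).
Proof. by move=> pq; apply: (big_ind2 (eq_upto n)) => // *; apply: eq_uptoM. Qed.

Lemma eq_upto_geom b n M : (0 < b)%N -> (n < M)%N ->
  eq_upto n (\sum_(x < n.+1) 'X^(b * x)) (\sum_(x < M) 'X^(b * x)).
Proof.
move=> b_gt0 lt_nM i le_in; rewrite -(subnKC lt_nM) [in RHS]big_split_ord /= coefD.
rewrite [X in _ = _ + X]coef_sum [X in _ = _ + X]big1 ?addr0 // => x _; rewrite coefXn.
case: eqP => // i_eq; move: le_in; rewrite i_eq leqNgt.
by rewrite (leq_trans (leq_addr x n.+1)) // leq_pmull.
Qed.

Lemma geom_split b c K :
  \sum_(x < c * K) 'X^(b * x) =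
    (\sum_(t < c) 'X^(b * t)) * \sum_(q < K) 'X^(b * c * q) :> {poly T}.
Proof.
elim: K => [|K IHK]; first by rewrite muln0 !big_ord0 mulr0.
rewrite big_ord_recr /= mulrDr -IHK mulnS addnC big_split_ord /=; congr (_ + _).
by rewrite mulr_suml; apply: eq_bigr => t _; rewrite -exprD mulnDr mulnA addnC.
Qed.

Lemma coef_geom_exp K k m : (m < K)%N ->
  ((\sum_(q < K) 'X^q : {poly T}) ^+ k.+1)`_m = 'C(m + k, k)%:R.
Proof.
have coef_geom i : (i < K)%N -> (\sum_(q < K) 'X^q : {poly T})`_i = 1.
  move=> lt_iK; rewrite coef_sum (bigD1 (Ordinal lt_iK)) //= coefXn eqxx big1 ?addr0 // => q q_neq.
  by rewrite coefXn; case: eqP => // q_eq; case/eqP: q_neq; apply: val_inj.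
elim: k m => [|k IHk] m lt_mK; first by rewrite expr1 coef_geom // bin0.
rewrite exprSr coefM -hockey_stick natr_sum; apply: eq_bigr => i _.
have lt_iK : (i < K)%N by apply: leq_ltn_trans lt_mK; rewrite -ltnS.
by rewrite IHk // coef_geom ?mulr1 // (leq_ltn_trans (leq_subr _ _) lt_mK).
Qed.

Lemma coef_geomXn_exp K d k m : (0 < d)%N -> (m < d * K)%N ->
  ((\sum_(q < K) 'X^(d * q) : {poly T}) ^+ k.+1)`_m =
    if (d %| m)%N then 'C(m %/ d + k, k)%:R else 0.
Proof.
move=> d_gt0 lt_m_dK.
have -> : \sum_(q < K) 'X^(d * q) = (\sum_(q < K) 'X^q) \Po 'X^d :> {poly T}.
  by rewrite linear_sum; apply: eq_bigr => q _; rewrite /= comp_Xn_poly exprM.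
rewrite -rmorphXn coef_comp_poly_Xn //; case: ifP => // _.
by rewrite coef_geom_exp // ltn_divLR // mulnC.
Qed.

Lemma p_count_box {r} (a : 'I_r.+1 -> nat) D n :
  (forall i, 0 < a i)%N -> (0 < D)%N -> (forall i, a i %| D)%N ->
  (p_count a n)%:R =
    \sum_(jj : {ffun 'I_r.+1 -> 'I_D} | in_box a jj)
      (if (weight a jj <= n)%N && (D %| n - weight a jj)%N
       then 'C((n - weight a jj) %/ D + r, r)%:R else 0) :> T.
Proof.
move=> a_gt0 D_gt0 a_dvd_D; rewrite p_count_coef.
have bound_gt0 i : (0 < D %/ a i)%N by rewrite divn_gt0 // dvdn_leq.
rewrite (@eq_upto_prod n _ _ (fun i => \sum_(x < D %/ a i * n.+1) 'X^(a i * x))) //;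
  last by move=> i; apply: eq_upto_geom; rewrite ?leq_pmull.
under eq_bigr => i _ do rewrite geom_split (mulnC (a i)) divnK //.
rewrite big_split /= prodr_const card_ord.
under eq_bigr => i _ do
  rewrite (big_ord_widen D (fun t => 'X^(a i * t)) (leq_div D (a i))).
rewrite (bigA_distr_big_dep _ (fun i (t : 'I_D) => 'X^(a i * t))) /= mulr_suml coef_sum.
apply: eq_big => [jj|jj _]; first by apply/familyP/forallP => jj_box i; apply: jj_box.
rewrite prodrXr coefXnM ltnNge; case: leqP => //= le_wn; rewrite coef_geomXn_exp //.
by apply: leq_ltn_trans (leq_subr _ _) _; rewrite leq_pmull.
Qed.

End GeneratingFunction.

Lemma stir_expansion (R : comNzRingType) r (y : R) :
  \sum_(k < r.+1) (stir r.+1 k)%:~R * y ^+ k = \prod_(1 <= t < r.+1) (y + t%:R).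
Proof.
pose p : {poly R} := \prod_(1 <= t < r.+1) ('X + t%:R%:P).
have p_intr : map_poly intr (\prod_(1 <= t < r.+1) ('X + t%:R%:P) : {poly int}) = p.
  rewrite rmorph_prod; apply: eq_bigr => t _.
  by rewrite rmorphD /= map_polyX map_polyC /= rmorph_nat.
have size_p : size p = r.+1.
  have -> : p = \prod_(x <- [seq - t%:R | t <- index_iota 1 r.+1]) ('X - x%:P).
    by rewrite big_map; apply: eq_bigr => t _; rewrite polyCN opprK.
  by rewrite size_prod_XsubC size_map size_iota subn1.
have -> : \prod_(1 <= t < r.+1) (y + t%:R) = p.[y].
  by rewrite horner_prod; apply: eq_bigr => t _; rewrite hornerD hornerX hornerC.
rewrite (horner_coef_wide y (eq_leq size_p)); apply: eq_bigr => k _.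
by rewrite -p_intr coef_map.
Qed.

Lemma binomial_regroup (R : comUnitRingType) r (s : nat -> R) (A x d : R) :
  \sum_(1 <= m < r.+1) \sum_(m.-1 <= k < r)
     (s k * (-1) ^+ (k - m.-1) * 'C(k, m.-1)%:R * (d ^- k * A ^+ (k - m.-1) * x ^+ m.-1))
  = \sum_(k < r) s k * ((x - A) / d) ^+ k.
Proof.
rewrite big_add1 /= -(big_mkord xpredT (fun k => s k * ((x - A) / d) ^+ k)).
under eq_bigr => i _ do rewrite (big_nat_widenl _ 0) // big_mkcond.
rewrite exchange_big_nat /=; apply: eq_big_nat => k /andP[_ lt_kr].
rewrite expr_div_n addrC exprDn mulr_suml mulr_sumr.
rewrite -(big_mkord xpredT (fun i => s k * ((- A) ^+ (k - i) * x ^+ i *+ 'C(k, i) / d ^+ k))).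
rewrite [in RHS](big_nat_widen _ _ r) // [in RHS]big_mkcond.
apply: eq_big_nat => i /andP[_ lt_ir] /=; rewrite ltnS; case: leqP => // _.
rewrite (exprNn A) -(mulr_natr (_ * x ^+ i)).
move: ((-1) ^+ (k - i)) (A ^+ (k - i)) (x ^+ i) ('C(k, i)%:R : R) (d ^- k) (s k).
by move=> *; ring.
Qed.

Lemma prod_addn_ffact N r : (\prod_(1 <= t < r.+1) (N + t) = (N + r) ^_ r)%N.
Proof.
elim: r => [|r IHr]; first by rewrite big_geq // ffactn0.
by rewrite big_nat_recr //= IHr addnS ffactSS mulnC.
Qed.

Lemma prod_natrD_bin (R : nzSemiRingType) N r :
  \prod_(1 <= t < r.+1) (N%:R + t%:R : R) = ('C(N + r, r) * r`!)%:R.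
Proof.
rewrite bin_ffact -prod_addn_ffact natr_prod.
by apply: eq_bigr => t _; rewrite natrD.
Qed.

Lemma prod_natrD_eq0 (R : comNzRingType) N r : (0 < N <= r)%N ->
  \prod_(1 <= t < r.+1) (- N%:R + t%:R : R) = 0.
Proof.
move=> /andP[N_gt0 le_Nr].
by rewrite (bigD1_seq N) ?mem_index_iota ?N_gt0 ?iota_uniq //= addNr mul0r.
Qed.

Lemma sum_prim_root_pow (F : fieldType) (z : F) D A n : D.-primitive_root z ->
  \sum_(t < D) (z ^+ t) ^+ A * (z ^+ t) ^- n = if A == n %[mod D] then D%:R else 0.
Proof.
move=> z_prim; have zD1 := prim_expr_order z_prim.
have zn_neq0 : z ^+ n != 0.
  by rewrite expf_eq0 (prim_root_eq0 z_prim) (gtn_eqF (prim_order_gt0 z_prim)) andbF.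
set w := z ^+ A / z ^+ n.
have termE t : (z ^+ t) ^+ A * (z ^+ t) ^- n = w ^+ t.
  by rewrite exprMn exprVn (exprAC z A) (exprAC z n).
under eq_bigr do rewrite termE.
have w1 : (w == 1) = (A == n %[mod D]).
  by rewrite -(inj_eq (mulIf zn_neq0)) divfK // mul1r (eq_prim_root_expr z_prim).
rewrite -w1; have [->|w_neq1] := eqVneq w 1.
  by rewrite (eq_bigr (fun _ => 1)) ?sumr_const ?card_ord // => t _; rewrite expr1n.
have : (w - 1) * \sum_(t < D) w ^+ t = 0.
  by rewrite -subrX1 /w exprMn exprVn -!exprM !(mulnC _ D) !exprM zD1 !expr1n invr1 mulr1 subrr.
by move/eqP; rewrite mulf_eq0 subr_eq0 (negbTE w_neq1) => /eqP.
Qed.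

Lemma sum_residue_select (R : nzRingType) (w : R) (j A : nat) : (0 < j)%N -> w ^+ j = 1 ->
  \sum_(1 <= l < j.+1) (if A == l %[mod j] then w ^+ l else 0) = w ^+ A.
Proof.
move=> j_gt0 wj1; pose f l := if A == l %[mod j] then w ^+ l else 0.
change (\sum_(1 <= l < j.+1) f l = w ^+ A).
have shift : \sum_(1 <= l < j.+1) f l = \sum_(0 <= l < j) f l.
  have fj : f j = f 0%N by rewrite /f modnn mod0n wj1 expr0.
  by apply: (addrI (f 0%N)); rewrite -big_ltn // big_nat_recr //= fj addrC.
rewrite shift big_mkord (bigD1 (Ordinal (ltn_pmod A j_gt0))) //= big1 ?addr0.
  by rewrite /f modn_mod eqxx expr_mod.
move=> l /eqP l_neq; rewrite /f (modn_small (ltn_ord l)); case: eqP => // A_mod.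
by case: l_neq; apply: val_inj; rewrite /= A_mod.
Qed.

Section ExplicitExpansion.
Context {F : numFieldType} {r : nat} (a : 'I_r.+1 -> nat) (D : nat).

Definition shifted_prod (A : nat) : {poly F} :=
  \prod_(1 <= t < r.+1) (('X - A%:R%:P) * (D%:R)^-1%:P + t%:R%:P).

(* F_lambda; the number of parts is r + 1 in this section. *)
Definition expansion_poly (lambda : F) : {poly F} :=
  (D%:R * r`!%:R)^-1 *: \sum_(jj : {ffun 'I_r.+1 -> 'I_D} | in_box a jj)
    lambda ^+ weight a jj *: shifted_prod (weight a jj).

Lemma horner_shifted_prod A x :
  (shifted_prod A).[x] = \prod_(1 <= t < r.+1) ((x - A%:R) / D%:R + t%:R).
Proof. by rewrite horner_prod; apply: eq_bigr => t _; rewrite !hornerE. Qed.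

Lemma horner_expansion_poly (w : F) j x : (0 < j)%N -> w ^+ j = 1 ->
  (expansion_poly w).[x] = (D%:R * r`!%:R)^-1 *
    \sum_(1 <= m < r.+2) \sum_(1 <= l < j.+1) w ^+ l *
      \sum_(m.-1 <= k < r.+1)
        ((stir r.+1 k)%:~R * (-1) ^+ (k - m.-1) * ('C(k, m.-1))%:R *
         \sum_(jj : {ffun 'I_r.+1 -> 'I_D} | [forall i, (jj i < D %/ a i)%N] &&
                 ((\sum_(i < r.+1) a i * jj i)%N == l %[mod j]))
           ((D%:R) ^- k * ((\sum_(i < r.+1) a i * jj i)%N)%:R ^+ (k - m.-1) * x ^+ m.-1)).
Proof.
move=> j_gt0 wj1; rewrite /expansion_poly hornerZ horner_sum; congr (_ * _).
under eq_bigr => jj _ do rewrite hornerZ horner_shifted_prod -stir_expansion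
  -(binomial_regroup _ _ (fun k => (stir r.+1 k)%:~R))
  -(sum_residue_select _ _ _ (weight a jj) j_gt0 wj1) mulr_suml.
under eq_bigr => jj _ do under eq_bigr => l _ do rewrite mulr_sumr.
rewrite [LHS]exchange_big; under eq_bigr => l _ do rewrite exchange_big.
rewrite [LHS]exchange_big; apply: eq_bigr => m _; apply: eq_bigr => l _ /=.
rewrite [RHS]mulr_sumr; under [RHS]eq_bigr => k _ do rewrite big_mkcondr /= !mulr_sumr.
rewrite [RHS]exchange_big; apply: eq_bigr => jj _; rewrite /weight.
case: ifP => _; first by rewrite mulr_sumr.
by rewrite mul0r big1 // => k _; rewrite !mulr0.
Qed.

Hypotheses (a_gt0 : forall i, (0 < a i)%N) (D_gt0 : (0 < D)%N).
Hypothesis a_dvd_D : forall i, (a i %| D)%N.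

Lemma weight_lt {jj : {ffun 'I_r.+1 -> 'I_D}} : in_box a jj -> (weight a jj < r.+1 * D)%N.
Proof.
move=> /forallP jj_box; apply: (@leq_ltn_trans (\sum_(i < r.+1) D.-1)).
  apply: leq_sum => i _; rewrite -ltnS prednK //.
  by rewrite -[ltnRHS](divnK (a_dvd_D i)) mulnC ltn_pmul2r.
by rewrite sum_nat_const card_ord ltn_pmul2l // prednK.
Qed.

Lemma bin_quasi_poly A n : (A < r.+1 * D)%N ->
  (D%:R * r`!%:R)^-1 * ((if A == n %[mod D] then D%:R else 0) *
    \prod_(1 <= t < r.+1) ((n%:R - A%:R) / D%:R + t%:R))
  = if (A <= n)%N && (D %| n - A)%N then 'C((n - A) %/ D + r, r)%:R else 0 :> F.
Proof.
move=> A_lt; have D_neq0 : (D%:R : F) != 0 by rewrite pnatr_eq0 -lt0n.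
have D_unit : (D%:R : F) \is a GRing.unit by rewrite unitfE.
have fact_neq0 : (r`!%:R : F) != 0 by rewrite pnatr_eq0 -lt0n fact_gt0.
case: leqP => [le_An|lt_nA] /=.
  rewrite eq_sym (eqn_mod_dvd _ le_An); case: ifP => [dvd_D|_]; last by rewrite mul0r mulr0.
  by rewrite -natrB // -natr_div // prod_natrD_bin natrM; field; apply/andP.
case: ifP => [A_mod|_]; last by rewrite mul0r mulr0.
have dvd_D : (D %| A - n)%N by rewrite -eqn_mod_dvd ?(ltnW lt_nA) // eq_sym.
rewrite -opprB -natrB ?(ltnW lt_nA) // mulNr -natr_div // prod_natrD_eq0 ?mulr0 //.
rewrite divn_gt0 // dvdn_leq ?subn_gt0 //= -ltnS ltn_divLR //.
exact: leq_ltn_trans (leq_subr _ _) A_lt.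
Qed.

Lemma p_count_expansion (z : F) n : D.-primitive_root z ->
  (p_count a n)%:R = \sum_(t < D) (expansion_poly (z ^+ t)).[n%:R] * (z ^+ t) ^- n.
Proof.
move=> z_prim; rewrite (p_count_box F a D n a_gt0 D_gt0 a_dvd_D) /expansion_poly.
under [RHS]eq_bigr => t _ do rewrite hornerZ horner_sum -mulrA mulr_suml.
rewrite -mulr_sumr exchange_big mulr_sumr; apply: eq_big => // jj jj_box.
rewrite -(bin_quasi_poly _ n (weight_lt jj_box)) -(sum_prim_root_pow _ _ _ _ n z_prim).
rewrite mulr_suml; congr (_ * _); apply: eq_bigr => t _.
by rewrite hornerZ horner_shifted_prod mulrAC.
Qed.

End ExplicitExpansion.

Theorem proposition4p2 (R : realType) (r : nat) (a : 'I_r -> nat) (D j : nat)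
  (P : R[i] -> {poly R[i]}) :
  (1 <= r)%N ->
  (forall i, (0 < a i)%N) ->
  (0 < D)%N ->
  (forall i, (a i %| D)%N) ->
  (1 <= j)%N ->
  (exists i, (j %| a i)%N) ->
  (* P is the (unique) family of polynomials indexed by the D-th roots of
     unity lambda = rho D ^+ k, k < D, representing p_a *)
  (forall n : nat,
     (p_count a n)%:R = \sum_(k < D) (P (rho R D ^+ k)).[n%:R] * (rho R D ^+ k) ^- n) ->
  forall n : nat,
    (P (rho R j)).[n%:R] * (rho R j) ^- n =
    (rho R j) ^- n / (D%:R * (r.-1)`!%:R) *
    \sum_(1 <= m < r.+1) \sum_(1 <= l < j.+1) (rho R j) ^+ l *
      \sum_(m.-1 <= k < r)
        ((stir r k)%:~R * (-1) ^+ (k - m.-1) * ('C(k, m.-1))%:R *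
         \sum_(jj : {ffun 'I_r -> 'I_D} |
                 [forall i, (jj i < D %/ a i)%N] &&
                 ((\sum_(i < r) a i * jj i)%N == l %[mod j]))
           ((D%:R) ^- k * ((\sum_(i < r) a i * jj i)%N)%:R ^+ (k - m.-1)
            * (n%:R) ^+ m.-1)).
Proof.
move=> r_gt0 a_gt0 D_gt0 a_dvd_D j_gt0 [i0 j_dvd_ai0] P_rep n.
have j_dvd_D : (j %| D)%N := dvdn_trans j_dvd_ai0 (a_dvd_D i0).
clear i0 j_dvd_ai0; case: r r_gt0 a a_gt0 a_dvd_D P_rep => [//|r] _ a a_gt0 a_dvd_D P_rep.
have rhoD_prim := rho_primitive R D_gt0.
have P_expansion : forall t : 'I_D, P (rho R D ^+ t) = expansion_poly a D (rho R D ^+ t).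
  apply: (prim_root_quasi_poly_uniq rhoD_prim) => m.
  by rewrite -P_rep; apply: p_count_expansion.
have rho_jE : rho R j = rho R D ^+ (Ordinal (ltn_pmod (D %/ j) D_gt0)).
  by rewrite /= prim_expr_mod // (rho_dvd R D_gt0 j_dvd_D).
rewrite rho_jE P_expansion -rho_jE (horner_expansion_poly a D _ j _ j_gt0) //.
  by rewrite mulrC mulrA.
exact/prim_expr_order/rho_primitive.
Qed.
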